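(* Let $(R,\mathfrak m)$ be a Cohen–Macaulay local ring of dimension $d\ge1$ with infinite residue field, $I$ an $\mathfrak m$-primary ideal, $x\in I$ a superficial element for $I$, $S=R/(x)$ and $I'=I/(x)=IS$. Then: (1) if $\operatorname{n}(I)>\rho(I)-1$, then $\operatorname{n}(I')=\operatorname{n}(I)+1$; (2) if $\operatorname{n}(I)=\rho(I)-1$, then $\operatorname{n}(I')\le\operatorname{n}(I)+1$; (3) if $\operatorname{n}(I)<\rho(I)-1$, then $\operatorname{n}(I')\ge\operatorname{n}(I)+1$.
   Context: $\lambda$ denotes length. For an $\mathfrak m$-primary ideal $K$ of a local ring $A$, $H_K(n)=\lambda(A/K^n)$ is the Hilbert–Samuel function and $P_K$ the Hilbert–Samuel polynomial (the polynomial with $P_K(n)=H_K(n)$ for all $n\gg0$). The postulation number is $\operatorname{n}(K)=\min\{n\in\mathbb Z: P_K(t)=H_K(t)\text{ for all } t>n\}$. The Ratliff–Rush closure of an ideal $K$ is $\widetilde K=\bigcup_{n\ge1}(K^{n+1}:K^n)$. The stability index of the Ratliff–Rush filtration is $\rho(I)=\min\{i\ge1:\widetilde{I^n}=I^n\text{ for all } n\ge i\}$. An element $x\in I$ is superficial for $I$ if there is $c>0$ with $(I^{n+1}:x)\cap I^c=I^n$ for all $n\ge c$. *)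

From HB Require Import structures.
From mathcomp Require Import all_boot all_order all_algebra.
Set Implicit Arguments. Unset Strict Implicit. Unset Printing Implicit Defensive.
Import Order.TTheory GRing.Theory Num.Theory.
Local Open Scope ring_scope.

Definition is_ideal (A : comPzRingType) (J : A -> Prop) : Prop :=
  [/\ J 0, (forall a b, J a -> J b -> J (a + b)) & (forall r a, J a -> J (r * a))].

Definition subI (A : Type) (J K : A -> Prop) : Prop := forall z, J z -> K z.
Definition eqI (A : Type) (J K : A -> Prop) : Prop := forall z, J z <-> K z.
Definition ssubI (A : Type) (J K : A -> Prop) : Prop := subI J K /\ ~ subI K J.

Definition fullI (A : Type) : A -> Prop := fun _ => True.

Definition gen (A : comPzRingType) (X : A -> Prop) : A -> Prop :=
  fun z => forall J, is_ideal J -> subI X J -> J z.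

Definition iprod (A : comPzRingType) (K L : A -> Prop) : A -> Prop :=
  gen (fun z => exists a b, [/\ K a, L b & z = a * b]).

Fixpoint ipow (A : comPzRingType) (K : A -> Prop) (n : nat) : A -> Prop :=
  match n with
  | 0 => @fullI A
  | n'.+1 => iprod (ipow K n') K
  end.

Definition ipowz (A : comPzRingType) (K : A -> Prop) (t : int) : A -> Prop :=
  if (t <= 0)%R then @fullI A else ipow K (absz t).

Definition icolon (A : comPzRingType) (K L : A -> Prop) : A -> Prop :=
  fun r => forall b, L b -> K (r * b).

Definition principal (A : comPzRingType) (x : A) : A -> Prop :=
  fun z => exists a, z = a * x.

(* a strictly increasing chain J <= c 0 < c 1 < ... < c k of ideals of A;
   such chains correspond to chains of submodules of A/J of length k *)
Definition ideal_chain (A : comPzRingType) (J : A -> Prop)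
    (c : nat -> (A -> Prop)) (k : nat) : Prop :=
  [/\ forall i, (i <= k)%N -> is_ideal (c i),
      subI J (c 0%N) &
      forall i, (i < k)%N -> ssubI (c i) (c i.+1)].

(* length_is J l  <->  lambda(A/J) = l (finite) *)
Definition length_is (A : comPzRingType) (J : A -> Prop) (l : nat) : Prop :=
  (exists c, ideal_chain J c l) /\ (forall c k, ideal_chain J c k -> (k <= l)%N).

Definition HS_agree (A : comPzRingType) (K : A -> Prop) (P : {poly rat}) (t : int)
    : Prop :=
  exists l, length_is (ipowz K t) l /\ P.[t%:~R] = l%:R.

(* postulation K n  <->  n(K) = n : the polynomial P agreeing with H_K for all
   t > n (hence P = P_K) and n is minimal, i.e. P(n) <> H_K(n). *)
Definition postulation (A : comPzRingType) (K : A -> Prop) (n : int) : Prop :=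
  exists P : {poly rat},
    (forall t : int, (n < t)%R -> HS_agree K P t) /\ ~ HS_agree K P n.

Definition ratliff_rush (A : comPzRingType) (K : A -> Prop) : A -> Prop :=
  fun z => exists n, (1 <= n)%N /\ icolon (ipow K n.+1) (ipow K n) z.

Definition RR_stable_from (A : comPzRingType) (I : A -> Prop) (i : nat) : Prop :=
  forall n, (i <= n)%N -> eqI (ratliff_rush (ipow I n)) (ipow I n).

Definition rho_is (A : comPzRingType) (I : A -> Prop) (r : nat) : Prop :=
  [/\ (1 <= r)%N, RR_stable_from I r &
      forall i, (1 <= i)%N -> (i < r)%N -> ~ RR_stable_from I i].

Definition superficial (A : comPzRingType) (I : A -> Prop) (x : A) : Prop :=
  I x /\ exists c, (0 < c)%N /\ forall n, (c <= n)%N ->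
    eqI (fun z => ipow I n.+1 (z * x) /\ ipow I c z) (ipow I n).

(* the set of non-units; R is local iff this is an ideal (it is then m) *)
Definition nonunits (R : comUnitRingType) : R -> Prop := fun z => z \isn't a GRing.unit.

Definition is_local (R : comUnitRingType) : Prop := is_ideal (@nonunits R).

Definition noetherian (A : comPzRingType) : Prop :=
  forall c : nat -> (A -> Prop), (forall i, is_ideal (c i)) ->
    (forall i, subI (c i) (c i.+1)) ->
    exists N, forall i, (N <= i)%N -> subI (c i) (c N).

Definition is_prime_ideal (A : comPzRingType) (P : A -> Prop) : Prop :=
  [/\ is_ideal P, ~ P 1 & forall a b, P (a * b) -> P a \/ P b].

Definition prime_chain (A : comPzRingType) (c : nat -> (A -> Prop)) (k : nat) : Prop :=
  (forall i, (i <= k)%N -> is_prime_ideal (c i)) /\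
  (forall i, (i < k)%N -> ssubI (c i) (c i.+1)).

Definition dim_is (A : comPzRingType) (d : nat) : Prop :=
  (exists c : nat -> (A -> Prop), prime_chain c d) /\ (forall (c : nat -> (A -> Prop)) k, prime_chain c k -> (k <= d)%N).

Definition gen_seq (A : comPzRingType) (s : seq A) : A -> Prop :=
  gen (fun z => z \in s).

Definition regular_seq (A : comPzRingType) (xs : seq A) : Prop :=
  (forall i, (i < size xs)%N -> forall r,
      gen_seq (take i xs) (nth 0 xs i * r) -> gen_seq (take i xs) r) /\
  ~ gen_seq xs 1.

Definition depth_is (R : comUnitRingType) (k : nat) : Prop :=
  (exists xs : seq R, [/\ size xs = k, all (fun z => z \isn't a GRing.unit) xs & regular_seq xs]) /\
  (forall xs : seq R, all (fun z => z \isn't a GRing.unit) xs -> regular_seq xs -> (size xs <= k)%N).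

(* residue field R/m infinite: infinitely many elements pairwise distinct mod m *)
Definition infinite_residue_field (R : comUnitRingType) : Prop :=
  exists f : nat -> R, forall i j, i <> j -> (f i - f j) \is a GRing.unit.

(* m-primary ideal: proper ideal whose radical is m *)
Definition m_primary (R : comUnitRingType) (I : R -> Prop) : Prop :=
  [/\ is_ideal I, subI I (@nonunits R) &
      forall z, nonunits z -> exists k, I (z ^+ k)].

Definition ext_ideal (R S : comPzRingType) (f : R -> S) (I : R -> Prop) : S -> Prop :=
  gen (fun s => exists a, I a /\ s = f a).

(* Write H(t) = lambda(R/I^t) and H'(t) = lambda(S/I'^t).  For any ideal J
   and element x, the exact sequence 0 -> R/(J : x) -> R/J -> R/(J+(x)) -> 0
   gives lambda(R/J) = lambda(R/(J+(x))) + lambda(R/(J : x)); with J = I^t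
   and R/(I^t + (x)) = S/I'^t this reads H(t) = H'(t) + lambda(R/(I^t : x)).
   For a superficial x and n >= 1 one has I^n <= (I^(n+1) : x) <= ~I^n
   (the Ratliff-Rush closure), so H(t) = H'(t) + H(t-1) whenever t <= 1 or
   t > rho(I), while by minimality of rho(I) the inequality is strict at
   t = rho(I) >= 2.  Hence P_{I'}(t) = P_I(t) - P_I(t-1), and evaluating the
   recursion at t = n(I)+1 and t = n(I') yields the three comparisons. *)
From Stdlib Require Import Classical IndefiniteDescription.
From HB Require Import structures.
From mathcomp Require Import all_boot all_order all_algebra.
From mathcomp Require Import zify lra.
Set Implicit Arguments. Unset Strict Implicit. Unset Printing Implicit Defensive.
Import Order.TTheory GRing.Theory Num.Theory.
Local Open Scope ring_scope.

Section Ideals.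
Variable A : comPzRingType.
Implicit Types (J K L X : A -> Prop) (a b r z : A).

Lemma idealD J a b : is_ideal J -> J a -> J b -> J (a + b).
Proof. by case=> _ H _; apply: H. Qed.

Lemma idealM J r a : is_ideal J -> J a -> J (r * a).
Proof. by case=> _ _ H; apply: H. Qed.

Lemma idealMr J r a : is_ideal J -> J a -> J (a * r).
Proof. by move=> HJ Ha; rewrite mulrC; apply: idealM. Qed.

Lemma ideal0 J : is_ideal J -> J 0.
Proof. by case. Qed.

Lemma idealB J a b : is_ideal J -> J a -> J b -> J (a - b).
Proof. by move=> HJ Ha Hb; apply: idealD => //; rewrite -mulN1r; apply: idealM. Qed.

Lemma gen_ideal X : is_ideal (gen X).
Proof.
split.
- by move=> J HJ _; apply: ideal0.
- by move=> a b Ha Hb J HJ HX; apply: idealD => //; [apply: Ha|apply: Hb].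
- by move=> r a Ha J HJ HX; apply: idealM => //; apply: Ha.
Qed.

Lemma gen_sub X : subI X (gen X).
Proof. by move=> z Hz J HJ HX; apply: HX. Qed.

Lemma gen_min X J : is_ideal J -> subI X J -> subI (gen X) J.
Proof. by move=> HJ HX z Hz; apply: Hz. Qed.

Lemma iprod_sub K L J :
  is_ideal J -> (forall a b, K a -> L b -> J (a * b)) -> subI (iprod K L) J.
Proof. by move=> HJ H; apply: gen_min => // w [a [b [Ha Hb ->]]]; exact: H. Qed.

Lemma iprod_mono K K' L : subI K K' -> subI (iprod K L) (iprod K' L).
Proof.
move=> H; apply: iprod_sub; first exact: gen_ideal.
by move=> a b Ha Hb; apply: gen_sub; exists a, b; split => //; apply: H.
Qed.

(* The ideal [{b | J (z * b)}]; used to prove statements about all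
   elements of a generated ideal. *)
Lemma mul_preim_ideal J z : is_ideal J -> is_ideal (fun b => J (z * b)).
Proof.
move=> HJ; split.
- by rewrite mulr0; exact: ideal0.
- by move=> p q Hp Hq; rewrite mulrDr; exact: idealD.
- by move=> r p Hp; rewrite mulrCA; exact: idealM.
Qed.

End Ideals.

Section Powers.
Variables (A : comPzRingType) (I : A -> Prop).
Implicit Types (u v z : A).

Lemma ipow_ideal n : is_ideal (ipow I n).
Proof. by case: n => [|n] /=; [by [] | apply: gen_ideal]. Qed.

Lemma ipowS_gen n u v : ipow I n u -> I v -> ipow I n.+1 (u * v).
Proof. by move=> Hu Hv; apply: gen_sub; exists u, v. Qed.

Lemma ipow1 : is_ideal I -> eqI (ipow I 1) I.
Proof.
move=> HI z; split; last by move=> Hz; rewrite -(mul1r z); apply: ipowS_gen.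
by apply: gen_min => // w [p [q [_ Hq ->]]]; exact: idealM.
Qed.

Lemma ipow_mul a b u v : ipow I a u -> ipow I b v -> ipow I (a + b) (u * v).
Proof.
move=> Hu; elim: b v => [|b IH] v /=.
  by move=> _; rewrite addn0 mulrC; exact: (idealM _ (ipow_ideal _)).
move=> Hv; rewrite addnS.
apply: (gen_min (mul_preim_ideal u (ipow_ideal (a + b).+1)) _ Hv).
by move=> w [p [q [Hp Hq ->]]]; rewrite mulrA; apply: ipowS_gen => //; apply: IH.
Qed.

Lemma ipow_split a b : subI (ipow I (a + b)) (iprod (ipow I a) (ipow I b)).
Proof.
elim: b => [|b IH].
  by move=> z; rewrite addn0 => Hz; rewrite -(mulr1 z); apply: gen_sub; exists z, 1.
rewrite addnS; apply: gen_min; first exact: gen_ideal.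
move=> w [u [v [Hu Hv ->]]].
pose K := fun u => iprod (ipow I a) (ipow I b.+1) (u * v).
have HK : is_ideal K.
  split; rewrite /K.
  - by rewrite mul0r; exact: (ideal0 (gen_ideal _)).
  - by move=> p q Hp Hq; rewrite mulrDl; exact: (idealD (gen_ideal _)).
  - by move=> r p Hp; rewrite -mulrA; exact: (idealM _ (gen_ideal _)).
apply: (gen_min HK _ (IH _ Hu)) => y [p [q [Hp Hq ->]]].
rewrite /K -mulrA; apply: gen_sub; exists p, (q * v); split => //.
exact: ipowS_gen.
Qed.

Lemma ipow_le m n : (m <= n)%N -> subI (ipow I n) (ipow I m).
Proof.
move/subnKC <- => z /ipow_split; apply: iprod_sub; first exact: ipow_ideal.
by move=> p q Hp _; exact: idealMr (ipow_ideal _) Hp.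
Qed.

Lemma ipow_ipow n m : eqI (ipow (ipow I n) m) (ipow I (n * m)).
Proof.
elim: m => [|m IH] z; first by rewrite muln0.
rewrite mulnS /=; split.
  apply: iprod_sub; first exact: ipow_ideal.
  by move=> a b Ha Hb; rewrite mulrC; apply: ipow_mul => //; apply/IH.
move=> Hz; rewrite addnC in Hz; have := ipow_split Hz.
by apply: iprod_mono => w /IH.
Qed.

End Powers.

Section Length.
Variable A : comPzRingType.
Implicit Types (J K : A -> Prop) (c : nat -> A -> Prop).

Lemma chain_mono J c k i j :
  ideal_chain J c k -> (i <= j)%N -> (j <= k)%N -> subI (c i) (c j).
Proof.
case=> _ _ Hs Hij; elim: j Hij => [|j IH]; first by rewrite leqn0 => /eqP -> _.
rewrite leq_eqVlt => /orP [/eqP -> _ z //|]; rewrite ltnS => Hij Hjk z Hz.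
by apply: (Hs j Hjk).1; apply: IH => //; apply: ltnW.
Qed.

Lemma chain_base J c k i : ideal_chain J c k -> (i <= k)%N -> subI J (c i).
Proof.
move=> Hc Hik z Hz; apply: (chain_mono Hc (leq0n i) Hik).
by case: Hc => _ H _; apply: H.
Qed.

Lemma chain_sub J K c k : subI J K -> ideal_chain K c k -> ideal_chain J c k.
Proof. by move=> HJK [H1 H2 H3]; split => // z Hz; apply/H2/HJK. Qed.

Lemma length_uniq J l1 l2 : length_is J l1 -> length_is J l2 -> l1 = l2.
Proof.
move=> [[c1 H1] B1] [[c2 H2] B2]; apply/eqP.
by rewrite eqn_leq (B2 _ _ H1) (B1 _ _ H2).
Qed.

Lemma length_eqI J K l : eqI J K -> length_is J l -> length_is K l.
Proof.
move=> E [[c Hc] B]; split; first by exists c; apply: (chain_sub _ Hc) => z /E.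
by move=> c' k Hc'; apply: (B c'); apply: (chain_sub _ Hc') => z /E.
Qed.

Lemma length_full : length_is (@fullI A) 0.
Proof.
split; first by exists (fun _ => @fullI A).
move=> c [|k] // [_ B S]; have [_ N] := S 0%N (ltn0Sn _).
by case: N => z _; apply: B.
Qed.

Lemma bounded_length J N :
  (forall c k, ideal_chain J c k -> (k <= N)%N) -> exists l, length_is J l.
Proof.
elim: N => [|N IH] B.
  by exists 0%N; split => //; exists (fun _ => @fullI A).
case: (classic (exists c, ideal_chain J c N.+1)) => [Hc|Hn]; first by exists N.+1.
apply: IH => c k Hc; have := B c k Hc; rewrite leq_eqVlt => /orP [/eqP Ek|//].
by case: Hn; exists c; rewrite -Ek.
Qed.

Lemma length_sub J K l :
  subI J K -> length_is J l -> exists l', length_is K l' /\ (l' <= l)%N.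
Proof.
move=> HJK [_ B].
have [l' Hl'] : exists l', length_is K l'.
  by apply: (bounded_length (N := l)) => c k Hc; apply: (B c); apply: chain_sub Hc.
exists l'; split => //; case: Hl' => [[c Hc] _]; apply: (B c).
exact: chain_sub Hc.
Qed.

(* [J < K] implies [lambda(A/K) < lambda(A/J)]: prepend [J] to a maximal
   chain above [K]. *)
Lemma length_ssub J K l l' :
  is_ideal J -> ssubI J K -> length_is J l -> length_is K l' -> (l' < l)%N.
Proof.
move=> HJ [HJK HKJ] [_ B] [[c Hc] _].
pose c' := fun i => if i is i'.+1 then c i' else J.
apply: (B c'); split => //.
- by case=> [|i] //= Hi; case: Hc => H _ _; apply: H.
- case=> [|i] /= Hi; last by case: Hc => _ _ H; apply: H.
  split; first by move=> z Hz; apply: (chain_base Hc (leq0n l')); apply: HJK.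
  move=> H; apply: HKJ => z Hz; apply: H.
  by case: Hc => _ H0 _; apply: H0.
Qed.

End Length.

Definition addx (A : comPzRingType) (J : A -> Prop) (x : A) : A -> Prop :=
  fun z => exists j r, J j /\ z = j + r * x.
Definition colx (A : comPzRingType) (J : A -> Prop) (x : A) : A -> Prop :=
  fun r => J (r * x).
Definition addmulx (A : comPzRingType) (J B : A -> Prop) (x : A) : A -> Prop :=
  fun z => exists j w, [/\ J j, B w & z = j + w * x].

Definition extend_chain (A : comPzRingType) (c : nat -> A -> Prop) (s : nat)
    (Y : A -> Prop) : nat -> A -> Prop :=
  fun i => if i == s.+1 then Y else c i.

Section Additivity.
Variables (A : comPzRingType) (x : A).
Implicit Types (J B C D X Y : A -> Prop).

Lemma addx_ideal J : is_ideal J -> is_ideal (addx J x).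
Proof.
move=> HJ; split.
- by exists 0, 0; rewrite mul0r addr0; split => //; apply: ideal0.
- move=> a b [j [r [Hj ->]]] [j' [r' [Hj' ->]]]; exists (j + j'), (r + r').
  by split; [apply: idealD | rewrite mulrDl addrACA].
- move=> s a [j [r [Hj ->]]]; exists (s * j), (s * r).
  by split; [apply: idealM | rewrite mulrDr mulrA].
Qed.

Lemma addx_sub J : subI J (addx J x).
Proof. by move=> z Hz; exists z, 0; rewrite mul0r addr0. Qed.

Lemma addx_mono J K : subI J K -> subI (addx J x) (addx K x).
Proof. by move=> H z [j [r [Hj ->]]]; exists j, r; split => //; apply: H. Qed.

Lemma colx_ideal J : is_ideal J -> is_ideal (colx J x).
Proof.
move=> HJ; split; rewrite /colx.
- by rewrite mul0r; apply: ideal0.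
- by move=> a b Ha Hb; rewrite mulrDl; apply: idealD.
- by move=> r a Ha; rewrite -mulrA; apply: idealM.
Qed.

Lemma colx_mono J K : subI J K -> subI (colx J x) (colx K x).
Proof. by move=> H z; apply: H. Qed.

Lemma addmulx_ideal J B : is_ideal J -> is_ideal B -> is_ideal (addmulx J B x).
Proof.
move=> HJ HB; split.
- by exists 0, 0; rewrite mul0r addr0; split => //; apply: ideal0.
- move=> a b [j [r [Hj Hr ->]]] [j' [r' [Hj' Hr' ->]]]; exists (j + j'), (r + r').
  by split; [apply: idealD | apply: idealD | rewrite mulrDl addrACA].
- move=> s a [j [r [Hj Hr ->]]]; exists (s * j), (s * r).
  by split; [apply: idealM | apply: idealM | rewrite mulrDr mulrA].
Qed.

Lemma addmulx_strict J B C :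
  is_ideal J -> is_ideal B -> subI (colx J x) B -> ssubI B C ->
  ssubI (addmulx J B x) (addmulx J C x).
Proof.
move=> HJ HB HcB [HBC HCB]; split.
  by move=> z [j [w [Hj Hw ->]]]; exists j, w; split => //; apply: HBC.
move=> H; apply: HCB => w Hw.
have [j [w' [Hj Hw' E]]] : addmulx J B x (w * x).
  by apply: H; exists 0, w; rewrite add0r; split => //; apply: ideal0.
have Hd : B (w - w') by apply: HcB; rewrite /colx mulrBl E addrK.
by rewrite -(subrK w' w); apply: idealD.
Qed.

Lemma concat_chain J a b p q :
  is_ideal J -> ideal_chain (addx J x) a p -> ideal_chain (colx J x) b q ->
  ideal_chain J (fun i => if (i <= q)%N then addmulx J (b i) x else a (i - q)%N)
    (q + p).
Proof.
move=> HJ Ha Hb; case: (Ha) => Ia Ba Sa; case: (Hb) => Ib Bb Sb.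
split.
- move=> i Hi; case: ifP => Hiq; first by apply: addmulx_ideal => //; apply: Ib.
  by apply: Ia; rewrite leq_subLR.
- by rewrite leq0n => z Hz; exists z, 0; rewrite mul0r addr0; split => //;
    apply: ideal0; apply: Ib.
- move=> i Hi; case: (ltngtP i q) => Hiq.
  + apply: addmulx_strict => //; first by apply: Ib; apply: ltnW.
      exact: (chain_base Hb (ltnW Hiq)).
    exact: Sb.
  + by rewrite subSn ?(ltnW Hiq) //; apply: Sa; rewrite ltn_subLR // ltnW.
  + subst i; rewrite subSnn.
    have Hp : (0 < p)%N by rewrite -{1}(addn0 q) ltn_add2l in Hi.
    have top_sub : subI (addmulx J (b q) x) (a 0%N).
      by move=> z [j [w [Hj _ ->]]]; apply: Ba; exists j, w.
    case: (Sa 0%N Hp) => H01 H10; split; first by move=> z /top_sub /H01.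
    by move=> H; apply: H10 => z /H /top_sub.
Qed.

Lemma length_addx_colx_le J l l1 l2 :
  is_ideal J -> length_is J l -> length_is (addx J x) l1 ->
  length_is (colx J x) l2 -> (l1 + l2 <= l)%N.
Proof.
move=> HJ [_ B] [[a Ha] _] [[b Hb] _].
by rewrite addnC; apply: B; apply: concat_chain Ha Hb.
Qed.

Lemma extend_chainP J X Y c s :
  ideal_chain J c s -> eqI (c s) X -> is_ideal Y -> ssubI X Y ->
  ideal_chain J (extend_chain c s Y) s.+1.
Proof.
move=> [I0 B0 S0] E HY [HXY HYX]; rewrite /extend_chain; split => //.
- move=> i Hi; case: eqP => // Ei; apply: I0.
  by move: Hi; rewrite leq_eqVlt => /orP [/eqP //|]; rewrite ltnS.
- move=> i Hi; rewrite (_ : (i == s.+1) = false) ?eqSS; last first.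
    by apply/negbTE; rewrite neq_ltn Hi.
  case: (eqVneq i s) => [->|Nis]; last by apply: S0; rewrite ltn_neqAle Nis -ltnS.
  split; first by move=> z /E /HXY.
  by move=> H; apply: HYX => z /H /E.
Qed.

Lemma extend_chain_top c s Y : eqI (extend_chain c s Y s.+1) Y.
Proof. by move=> z; rewrite /extend_chain eqxx. Qed.

Lemma pair_extract (a b : nat -> A -> Prop) k :
  (forall i, (i <= k)%N -> is_ideal (a i) /\ is_ideal (b i)) ->
  (forall i, (i < k)%N -> [/\ subI (a i) (a i.+1), subI (b i) (b i.+1) &
        (~ subI (a i.+1) (a i) \/ ~ subI (b i.+1) (b i))]) ->
  exists s1 s2 ca cb, [/\ (k <= s1 + s2)%N, ideal_chain (a 0%N) ca s1,
     eqI (ca s1) (a k), ideal_chain (b 0%N) cb s2 & eqI (cb s2) (b k)].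
Proof.
elim: k => [|k IH] HI HS.
  have [Ia Ib] := HI 0%N (leqnn 0).
  by exists 0%N, 0%N, (fun _ => a 0%N), (fun _ => b 0%N); split => //; split.
have [s1 [s2 [ca [cb [Hk Ca Ea Cb Eb]]]]] := IH
  (fun i Hi => HI i (leqW Hi)) (fun i Hi => HS i (ltnW Hi)).
have [Ha Hb Hor] := HS k (leqnn _).
have [IAk IBk] := HI k.+1 (leqnn _).
have keep_a : ~ ~ subI (a k.+1) (a k) -> eqI (ca s1) (a k.+1).
  by move=> /NNPP HA z; split => [/Ea/Ha | /HA/Ea].
have keep_b : ~ ~ subI (b k.+1) (b k) -> eqI (cb s2) (b k.+1).
  by move=> /NNPP HB z; split => [/Eb/Hb | /HB/Eb].
case: (classic (subI (a k.+1) (a k))) => HA;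
  case: (classic (subI (b k.+1) (b k))) => HB.
- by case: Hor.
- exists s1, s2.+1, ca, (extend_chain cb s2 (b k.+1)); split.
  + by rewrite addnS.
  + exact: Ca.
  + exact: keep_a.
  + exact: extend_chainP.
  + exact: extend_chain_top.
- exists s1.+1, s2, (extend_chain ca s1 (a k.+1)), cb; split.
  + by rewrite addSn.
  + exact: extend_chainP.
  + exact: extend_chain_top.
  + exact: Cb.
  + exact: keep_b.
- exists s1.+1, s2.+1, (extend_chain ca s1 (a k.+1)),
    (extend_chain cb s2 (b k.+1)); split.
  + by rewrite addSn addnS ltnS ltnW.
  + exact: extend_chainP.
  + exact: extend_chain_top.
  + exact: extend_chainP.
  + exact: extend_chain_top.
Qed.

Lemma modular_step C D :
  is_ideal C -> is_ideal D -> subI C D ->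
  subI (addx D x) (addx C x) -> subI (colx D x) (colx C x) -> subI D C.
Proof.
move=> HC HD HCD Ha Hc z Hz.
have [u [r [Hu E]]] : addx C x z by apply: Ha; apply: addx_sub.
have Hr : colx D x r.
  rewrite /colx (_ : r * x = z - u); last by rewrite E addrC addKr.
  by apply: idealB => //; apply: HCD.
by rewrite E; apply: idealD => //; apply: Hc.
Qed.

(* [lambda(A/J) <= l1 + l2]: along a maximal chain above [J], the pairs
   [(c_i + (x), (c_i : x))] increase strictly by modularity. *)
Lemma length_le_addx_colx J l l1 l2 :
  length_is J l -> length_is (addx J x) l1 ->
  length_is (colx J x) l2 -> (l <= l1 + l2)%N.
Proof.
move=> [[c Hc] _] [_ B1] [_ B2]; case: (Hc) => Ic Bc Sc.
pose a i := addx (c i) x; pose b i := colx (c i) x.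
have ideals : forall i, (i <= l)%N -> is_ideal (a i) /\ is_ideal (b i).
  by move=> i Hi; split; [apply: addx_ideal | apply: colx_ideal]; apply: Ic.
have steps : forall i, (i < l)%N -> [/\ subI (a i) (a i.+1), subI (b i) (b i.+1)
    & (~ subI (a i.+1) (a i) \/ ~ subI (b i.+1) (b i))].
  move=> i Hi; have [Hs Hns] := Sc i Hi.
  split; [exact: addx_mono | exact: colx_mono |].
  apply: NNPP => Hn; apply: Hns; apply: modular_step => //.
  + by apply: Ic; apply: ltnW.
  + by apply: Ic.
  + by apply: NNPP => H; apply: Hn; left.
  + by apply: NNPP => H; apply: Hn; right.
have [s1 [s2 [ca [cb [Hk Ca _ Cb _]]]]] := pair_extract ideals steps.
apply: (leq_trans Hk); apply: leq_add.
  by apply: (B1 ca); apply: chain_sub Ca; apply: addx_mono.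
by apply: (B2 cb); apply: chain_sub Cb; apply: colx_mono.
Qed.

(* Additivity of length along [x]: the exact sequence
   [0 -> A/(J : x) -> A/J -> A/(J + (x)) -> 0] gives
   [lambda(A/J) = lambda(A/(J + (x))) + lambda(A/(J : x))]. *)
Lemma length_split J l :
  is_ideal J -> length_is J l ->
  exists l1 l2, [/\ length_is (addx J x) l1, length_is (colx J x) l2
                  & l = (l1 + l2)%N].
Proof.
move=> HJ HL.
have [l1 [Hl1 _]] := length_sub (@addx_sub J) HL.
have [l2 Hl2] : exists l2, length_is (colx J x) l2.
  apply: (bounded_length (N := l)) => c k Hc.
  have Ha0 : ideal_chain (addx J x) (fun _ => @fullI A) 0 by [].
  by have := concat_chain HJ Ha0 Hc; rewrite addn0; case: HL => _; apply.
exists l1, l2; split => //; apply/eqP; rewrite eqn_leq.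
by rewrite (length_le_addx_colx HL Hl1 Hl2) (length_addx_colx_le HJ HL Hl1 Hl2).
Qed.

End Additivity.

Definition preim (R S : comPzRingType) (f : R -> S) (K : S -> Prop) : R -> Prop :=
  fun r => K (f r).
Definition img (R S : comPzRingType) (f : R -> S) (D : R -> Prop) : S -> Prop :=
  fun s => exists r, D r /\ f r = s.

Section Transfer.
Variables (R S : comPzRingType) (f : {rmorphism R -> S}).
Hypothesis Hsurj : forall s, exists r, f r = s.
Implicit Types (K : S -> Prop) (D J : R -> Prop).

Lemma preim_ideal K : is_ideal K -> is_ideal (preim f K).
Proof.
move=> HK; split; rewrite /preim.
- by rewrite rmorph0; apply: ideal0.
- by move=> a b Ha Hb; rewrite rmorphD; apply: idealD.
- by move=> r a Ha; rewrite rmorphM; apply: idealM.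
Qed.

Lemma img_ideal D : is_ideal D -> is_ideal (img f D).
Proof.
move=> HD; split.
- by exists 0; split; [apply: ideal0 | rewrite rmorph0].
- move=> a b [u [Hu <-]] [v [Hv <-]]; exists (u + v).
  by split; [apply: idealD | rewrite rmorphD].
- move=> s a [u [Hu <-]]; have [r <-] := Hsurj s; exists (r * u).
  by split; [apply: idealM | rewrite rmorphM].
Qed.

Lemma chain_preim K c k :
  ideal_chain K c k -> ideal_chain (preim f K) (fun i => preim f (c i)) k.
Proof.
move=> [Ic Bc Sc]; split.
- by move=> i Hi; apply: preim_ideal; apply: Ic.
- by move=> r Hr; apply: Bc.
- move=> i Hi; have [H1 H2] := Sc i Hi; split; first by move=> r; apply: H1.
  move=> H; apply: H2 => s Hs; have [r Er] := Hsurj s; rewrite -Er in Hs *.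
  exact: H.
Qed.

Lemma chain_img K d k : is_ideal K ->
  ideal_chain (preim f K) d k -> ideal_chain K (fun i => img f (d i)) k.
Proof.
move=> HK Hd; case: (Hd) => Id Bd Sd; split.
- by move=> i Hi; apply: img_ideal; apply: Id.
- move=> s Hs; have [r Er] := Hsurj s; exists r; split => //.
  by apply: Bd; rewrite /preim Er.
- move=> i Hi; have [H1 H2] := Sd i Hi; split.
    by move=> s [r [Hr <-]]; exists r; split => //; apply: H1.
  move=> H; apply: H2 => z Hz.
  have [w [Hw Ew]] : img f (d i) (f z) by apply: H; exists z.
  have Hzw : d i (z - w).
    apply: (chain_base Hd (ltnW Hi)).
    by rewrite /preim rmorphB Ew subrr; exact: ideal0.
  by rewrite -(subrK w z); apply: idealD => //; apply: Id; exact: ltnW.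
Qed.

Lemma length_preim K l :
  is_ideal K -> (length_is (preim f K) l <-> length_is K l).
Proof.
move=> HK; split.
- move=> [[d Hd] B]; split; first by exists (fun i => img f (d i)); exact: chain_img.
  by move=> c k /chain_preim; apply: B.
- move=> [[c Hc] B]; split; first by exists (fun i => preim f (c i)); exact: chain_preim.
  by move=> d k /(chain_img HK); apply: B.
Qed.

Lemma ipow_ext (I : R -> Prop) n :
  is_ideal I -> eqI (ipow (ext_ideal f I) n) (img f (ipow I n)).
Proof.
move=> HI; elim: n => [|n IH] s.
  by split => // _; have [r Er] := Hsurj s; exists r.
have Himg : is_ideal (img f (ipow I n.+1)) by apply: img_ideal; apply: ipow_ideal.
split.
  apply: iprod_sub => // a b /IH [u [Hu <-]].
  have ext_img : subI (ext_ideal f I) (img f I).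
    by apply: gen_min; [exact: img_ideal | move=> t [a' [Ha ->]]; exists a'].
  move=> /ext_img [v [Hv <-]].
  by exists (u * v); split; [apply: ipowS_gen | rewrite rmorphM].
move=> [r [Hr <-]].
have HP : is_ideal (preim f (ipow (ext_ideal f I) n.+1)).
  by apply: preim_ideal; apply: ipow_ideal.
apply: (gen_min HP _ Hr) => w [u [v [Hu Hv ->]]].
rewrite /preim rmorphM; apply: gen_sub; exists (f u), (f v); split => //.
  by apply/IH; exists u.
by apply: gen_sub; exists v.
Qed.

Lemma preim_img (x : R) J :
  (forall r, f r = 0 <-> principal x r) -> eqI (preim f (img f J)) (addx J x).
Proof.
move=> Hk r; split.
  move=> [j [Hj Ej]]; have : f (r - j) = 0 by rewrite rmorphB Ej subrr.
  by move/Hk => [a Ea]; exists j, a; rewrite -Ea addrC subrK.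
move=> [j [a [Hj ->]]]; exists j; split => //.
have Hx : f x = 0 by apply/Hk; exists 1; rewrite mul1r.
by rewrite rmorphD rmorphM Hx mulr0 addr0.
Qed.

Lemma length_ext_ipow (I : R -> Prop) (x : R) n l :
  (forall r, f r = 0 <-> principal x r) -> is_ideal I ->
  length_is (ipow (ext_ideal f I) n) l <-> length_is (addx (ipow I n) x) l.
Proof.
move=> Hk HI; have E : eqI (preim f (ipow (ext_ideal f I) n)) (addx (ipow I n) x).
  by move=> r; rewrite /preim ipow_ext //; apply: preim_img.
rewrite -length_preim; last exact: ipow_ideal.
split; apply: length_eqI => // z.
by rewrite E.
Qed.

End Transfer.

Section RatliffRush.
Variables (A : comPzRingType) (I : A -> Prop).
Hypothesis HI : is_ideal I.
Implicit Types (x z : A).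

Lemma ipow_mul_gen z m n t b :
  (forall u, ipow I m u -> ipow I (m + n) (z * u)) ->
  (m <= t)%N -> ipow I t b -> ipow I (t + n) (z * b).
Proof.
move=> H /subnKC <- /ipow_split.
apply: (gen_min (mul_preim_ideal z (ipow_ideal I _))) => w [u [v [Hu Hv ->]]].
rewrite mulrA (_ : (m + (t - m) + n = (m + n) + (t - m))%N); last by rewrite addnAC.
by apply: ipow_mul => //; apply: H.
Qed.

(* Membership in the Ratliff-Rush closure of [I^n], phrased with powers
   of [I] instead of powers of [I^n]: introduction and elimination. *)
Lemma RR_intro n m z :
  (1 <= m)%N -> (forall b, ipow I (n * m) b -> ipow I (n * m + n) (z * b)) ->
  ratliff_rush (ipow I n) z.
Proof.
move=> Hm H; exists m; split => // b /(ipow_ipow I _ _) Hb.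
by apply/(ipow_ipow I _ _); rewrite mulnS addnC; apply: H.
Qed.

Lemma RR_elim n z :
  ratliff_rush (ipow I n) z ->
  exists m, (1 <= m)%N /\
    forall t b, (n * m <= t)%N -> ipow I t b -> ipow I (t + n) (z * b).
Proof.
move=> [m [Hm H]]; exists m; split => // t b Ht Hb.
apply: (ipow_mul_gen _ Ht Hb) => u /(ipow_ipow I _ _) Hu.
by have := H u Hu => /(ipow_ipow I _ _); rewrite mulnS addnC.
Qed.

Lemma RR_self n : subI (ipow I n) (ratliff_rush (ipow I n)).
Proof.
move=> z Hz; exists 1%N; split => // b Hb.
by apply: ipowS_gen; apply/(ipow1 (ipow_ideal I n)).
Qed.

Lemma ipow_sub_colon x n : I x -> subI (ipow I n) (colx (ipow I n.+1) x).
Proof. by move=> Hx z Hz; apply: ipowS_gen. Qed.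

Lemma colon_sub_RR x n :
  superficial I x -> (1 <= n)%N ->
  subI (colx (ipow I n.+1) x) (ratliff_rush (ipow I n)).
Proof.
move=> [Hx [c [Hc Hs]]] Hn z Hz.
apply: (RR_intro (m := c)) => // b Hb.
have Hcn : (c <= n * c)%N by rewrite leq_pmull.
apply: (Hs (n * c + n)%N (leq_trans Hcn (leq_addr _ _)) (z * b)).1; split.
  rewrite mulrAC (_ : ((n * c + n).+1 = n.+1 + n * c)%N); last by rewrite addSn addnC.
  exact: ipow_mul.
by rewrite mulrC; apply: (idealMr _ (ipow_ideal I _)); exact: (ipow_le Hcn).
Qed.

Lemma RR_mulx x n z :
  I x -> (1 <= n)%N -> ratliff_rush (ipow I n) z -> ratliff_rush (ipow I n.+1) (z * x).
Proof.
move=> Hx Hn /RR_elim [m [Hm H]].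
apply: (RR_intro (m := n * m)); first by rewrite muln_gt0 Hn Hm.
move=> b Hb; rewrite -mulrA.
have Hxb : ipow I (n.+1 * (n * m) + 1) (x * b).
  by rewrite mulrC; apply: ipow_mul => //; apply/(ipow1 HI).
have := H _ _ _ Hxb; rewrite -addnA add1n; apply.
by rewrite mulSn; apply: leq_trans (leq_addr _ _); exact: leq_addr.
Qed.

Lemma colon_of_RR_closed x n :
  superficial I x -> (1 <= n)%N ->
  eqI (ratliff_rush (ipow I n)) (ipow I n) -> subI (colx (ipow I n.+1) x) (ipow I n).
Proof. by move=> Hs Hn E z /(colon_sub_RR Hs Hn) /E. Qed.

Lemma RR_closed_of_colon x n :
  I x -> (1 <= n)%N ->
  eqI (ratliff_rush (ipow I n.+1)) (ipow I n.+1) ->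
  subI (colx (ipow I n.+1) x) (ipow I n) ->
  eqI (ratliff_rush (ipow I n)) (ipow I n).
Proof.
move=> Hx Hn E H z; split; last exact: RR_self.
by move=> /(RR_mulx Hx Hn) /E; apply: H.
Qed.

End RatliffRush.

Definition hilbert (h : nat -> nat) (t : int) : nat :=
  if (t <= 0)%R then 0%N else h (absz t).

Section HilbertFunction.
Variables (A : comPzRingType) (K : A -> Prop) (h : nat -> nat).
Hypothesis Hh : forall n, length_is (ipow K n) (h n).

Lemma hilbert_nat (n : nat) : hilbert h n%:Z = h n.
Proof.
rewrite /hilbert; case: n => // .
by rewrite lexx; apply: (length_uniq (length_full A) (Hh 0%N)).
Qed.

Lemma HS_agreeE (Q : {poly rat}) t :
  HS_agree K Q t <-> Q.[t%:~R] = (hilbert h t)%:R.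
Proof.
rewrite /HS_agree /ipowz /hilbert; case: ifP => _.
  split; first by move=> [l [Hl ->]]; rewrite (length_uniq Hl (length_full A)).
  by move=> E; exists 0%N; split => //; apply: length_full.
split; first by move=> [l [Hl ->]]; rewrite (length_uniq Hl (Hh _)).
by move=> E; exists (h (absz t)).
Qed.

Lemma postulationE n :
  postulation K n -> exists P : {poly rat},
    (forall t, n < t -> P.[t%:~R] = (hilbert h t)%:R) /\
    P.[n%:~R] <> (hilbert h n)%:R.
Proof.
move=> [P [AP NP]]; exists P; split; first by move=> t /AP /HS_agreeE.
by move=> E; apply: NP; apply/HS_agreeE.
Qed.

End HilbertFunction.

(* An ideal with a postulation number has finite colength powers: lengths are
   known for large powers, and smaller powers are bigger ideals. *)
Lemma hilbert_exists (A : comPzRingType) (K : A -> Prop) n :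
  postulation K n -> exists h : nat -> nat, forall m, length_is (ipow K m) (h m).
Proof.
move=> [P [AP _]].
have hex : forall m, exists l, length_is (ipow K m) l.
  move=> m; have [|l [Hl _]] := AP (Posz (absz n + m).+1); first by lia.
  have Hle : (m <= (absz n + m).+1)%N by lia.
  by have [l' [Hl' _]] := length_sub (ipow_le Hle) Hl; exists l'.
exists (fun m => proj1_sig (constructive_indefinite_description _ (hex m))).
by move=> m; exact: (proj2_sig (constructive_indefinite_description _ (hex m))).
Qed.

Section HilbertRecursion.
Variables (R S : comPzRingType) (f : {rmorphism R -> S}).
Hypothesis Hsurj : forall s, exists r, f r = s.
Variables (I : R -> Prop) (x : R).
Hypotheses (Hker : forall r, f r = 0 <-> principal x r) (HI : is_ideal I).
Hypothesis Hx : superficial I x.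
Variables (h h' : nat -> nat).
Hypotheses (Hh : forall n, length_is (ipow I n) (h n))
           (Hh' : forall n, length_is (ipow (ext_ideal f I) n) (h' n)).

(* [H(n+1) = H'(n+1) + lambda(R/(I^(n+1) : x))] and [I^n <= (I^(n+1) : x)],
   so [H(n+1) <= H'(n+1) + H(n)], with equality iff [(I^(n+1) : x) = I^n]. *)
Lemma hilbert_step n :
  (subI (colx (ipow I n.+1) x) (ipow I n) -> h n.+1 = h' n.+1 + h n)%N /\
  (~ subI (colx (ipow I n.+1) x) (ipow I n) -> h n.+1 < h' n.+1 + h n)%N.
Proof.
have [Hxi _] := Hx.
have [l1 [l2 [H1 H2 ->]]] := length_split x (ipow_ideal I n.+1) (Hh n.+1).
have -> : l1 = h' n.+1.
  by apply: length_uniq H1 _; apply/(length_ext_ipow Hsurj n.+1 _ Hker HI).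
have Hsub := @ipow_sub_colon _ I x n Hxi.
split => [Hcol | Hncol]; first congr (_ + _)%N.
  by apply: (length_uniq H2); apply: length_eqI (Hh n) => z; split; auto.
by rewrite ltn_add2l; apply: (length_ssub (ipow_ideal _ _) _ (Hh n) H2).
Qed.

Variable rI : nat.
Hypothesis HrI : rho_is I rI.

(* [H(t) = H'(t) + H(t-1)] outside [2 <= t <= rho(I)]: for [t <= 0] all
   terms vanish, for [t = 1] the colon ideal is [R = I^0], and for
   [t > rho(I)] the power [I^(t-1)] is Ratliff-Rush closed. *)
Lemma hilbert_recursion (t : int) : (t <= 1) \/ (rI%:Z + 1 <= t) ->
  hilbert h t = (hilbert h' t + hilbert h (t - 1))%N.
Proof.
have [Hr1 Hst _] := HrI.
case: (lerP t 0) => Ht0.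
  by move=> _; rewrite /hilbert Ht0 (_ : t - 1 <= 0) //; lia.
have [n -> {Ht0}] : exists n : nat, t = n.+1%:Z by exists (absz t).-1; lia.
rewrite (_ : n.+1%:Z - 1 = n%:Z); last by lia.
rewrite !(hilbert_nat Hh) (hilbert_nat Hh') => Ht; apply: (hilbert_step n).1.
case: Ht => Ht; first by have -> : n = 0%N by lia.
by apply: colon_of_RR_closed Hx _ _; [lia | apply: Hst; lia].
Qed.

(* At [t = rho(I) >= 2] the recursion fails strictly, by minimality of
   [rho(I)]: otherwise [I^(rho-1)] would be Ratliff-Rush closed too. *)
Lemma hilbert_recursion_strict : (2 <= rI)%N ->
  (hilbert h rI%:Z < hilbert h' rI%:Z + hilbert h (rI%:Z - 1))%N.
Proof.
have [_ Hst Hmin] := HrI; have [Hxi _] := Hx.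
move=> H2; have [k Ek] : exists k, rI = k.+1 by exists rI.-1; lia.
rewrite Ek (_ : k.+1%:Z - 1 = k%:Z); last by lia.
rewrite !(hilbert_nat Hh) (hilbert_nat Hh'); apply: (hilbert_step k).2 => Hcol.
have Hk1 : (1 <= k)%N by lia.
apply: (Hmin k Hk1); first by rewrite Ek.
move=> m Hm; case: (ltngtP k m) => Hkm; [| lia |].
- by apply: Hst; rewrite Ek.
- subst m; apply: (RR_closed_of_colon HI Hxi Hk1) => //.
  by apply: Hst; rewrite Ek.
Qed.

End HilbertRecursion.

Lemma poly_eq_large (p q : {poly rat}) (N : int) :
  (forall t : int, N <= t -> p.[t%:~R] = q.[t%:~R]) -> p = q.
Proof.
move=> H; apply/eqP; rewrite -subr_eq0; apply/negPn/negP => Hne.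
pose s := [seq ((N + i%:Z)%:~R : rat) | i <- iota 0 (size (p - q))].
have Hall : all (root (p - q)) s.
  apply/allP => r /mapP [i _ ->]; rewrite /root hornerD hornerN H ?subrr //.
  by rewrite lerDl.
have Hu : uniq s.
  by rewrite map_inj_uniq ?iota_uniq // => i j /intr_inj /addrI [].
by have := max_poly_roots Hne Hall Hu; rewrite size_map size_iota ltnn.
Qed.

Section PostulationShift.
Variables (H H' : int -> nat) (P P' : {poly rat}) (nI nI' : int) (r : nat).
Hypotheses (AP : forall t, nI < t -> P.[t%:~R] = (H t)%:R)
           (NP : P.[nI%:~R] <> (H nI)%:R)
           (AP' : forall t, nI' < t -> P'.[t%:~R] = (H' t)%:R)
           (NP' : P'.[nI'%:~R] <> (H' nI')%:R).
Hypothesis recursion : forall t : int, (t <= 1) \/ (r%:Z + 1 <= t) ->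
  H t = (H' t + H (t - 1)%R)%N.
Hypothesis recursion_strict : (2 <= r)%N ->
  (H r%:Z < H' r%:Z + H (r%:Z - 1)%R)%N.

Let intrB1 (t : int) : ((t - 1)%:~R : rat) = t%:~R - 1.
Proof. by rewrite intrB. Qed.

(* [P'(t) = P(t) - P(t-1)], since both sides agree with [H'] for large [t]. *)
Lemma poly_difference (t : int) : P'.[t%:~R] = P.[t%:~R] - P.[(t - 1)%:~R].
Proof.
suff -> : P' = P - (P \Po ('X - 1)).
  by rewrite hornerD hornerN horner_comp !hornerE intrB1.
apply: (poly_eq_large (N := Num.max (nI + 2) (Num.max (r%:Z + 1) (nI' + 1)))).
move=> s; rewrite !ge_max => /andP [h1 /andP [h2 h3]].
rewrite hornerD hornerN horner_comp !hornerE.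
rewrite AP' ?AP; [|lia|lia]; rewrite -intrB1 AP; last by lia.
by rewrite (@recursion s) ?natrD ?addrK //; right.
Qed.

(* The recursion cannot hold at [t = nI + 1 > nI']: it would force
   [P(nI) = H(nI)]. *)
Lemma recursion_fails_after_nI (t : int) :
  (t <= 1) \/ (r%:Z + 1 <= t) -> nI' < t -> t = nI + 1 -> False.
Proof.
move=> Ht Ht' Et; apply: NP.
have := poly_difference t; rewrite AP' // AP; last by lia.
rewrite (recursion Ht) natrD (_ : t - 1 = nI); last by lia.
by move=> E; lra.
Qed.

(* [nI'] cannot lie beyond both [r] and [nI + 1]: there [P'] and [H'] agree. *)
Lemma nI'_bounded : r%:Z + 1 <= nI' -> nI + 2 <= nI' -> False.
Proof.
move=> Ht Ht'; apply: NP'; rewrite poly_difference AP; last by lia.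
rewrite AP; last by lia.
by rewrite (@recursion nI') ?natrD ?addrK //; right.
Qed.

Lemma postulation_shift :
  [/\ (r%:Z - 1 < nI -> nI' = nI + 1), (nI = r%:Z - 1 -> nI' <= nI + 1)
    & (nI < r%:Z - 1 -> nI + 1 <= nI')].
Proof.
split.
- move=> h; case: (ltrgtP nI' (nI + 1)) => // h'; exfalso.
    by apply: (recursion_fails_after_nI (t := nI + 1)) => //; right; lia.
  by apply: nI'_bounded; lia.
- by move=> h; rewrite leNgt; apply/negP => h'; apply: nI'_bounded; lia.
- move=> h; rewrite leNgt; apply/negP => h'.
  case: (leqP 2 r) => H2; last first.
    by apply: (recursion_fails_after_nI (t := nI + 1)) => //; left; lia.
  have := recursion_strict H2; have := poly_difference r%:Z.
  rewrite AP'; last by lia.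
  rewrite AP; last by lia. rewrite AP; last by lia.
  by move=> E; rewrite -(ltr_nat rat) natrD; lra.
Qed.

End PostulationShift.

Unset Implicit Arguments. Set Strict Implicit.

Theorem proposition3p1
  (R : comUnitRingType) (d : nat)
  (Hloc : is_local R) (Hnoeth : noetherian R)
  (Hdim : dim_is R d) (Hd : (1 <= d)%N) (HCM : depth_is R d)
  (Hres : infinite_residue_field R)
  (I : R -> Prop) (HI : m_primary I)
  (x : R) (Hx : superficial I x)
  (S : comNzRingType) (f : {rmorphism R -> S})
  (Hsurj : forall s : S, exists r, f r = s)
  (Hker : forall r, f r = 0 <-> principal x r)
  (nI : int) (rI : nat) (nI' : int)
  (HnI : postulation I nI) (HrI : rho_is I rI)
  (HnI' : postulation (ext_ideal f I) nI') :
  [/\ (rI%:Z - 1 < nI -> nI' = nI + 1),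
      (nI = rI%:Z - 1 -> nI' <= nI + 1) &
      (nI < rI%:Z - 1 -> nI + 1 <= nI')].
Proof.
have HIi : is_ideal I by case: HI.
have [h Hh] := hilbert_exists HnI.
have [h' Hh'] := hilbert_exists HnI'.
have [P [AP NP]] := postulationE Hh HnI.
have [P' [AP' NP']] := postulationE Hh' HnI'.
apply: (postulation_shift AP NP AP' NP').
- exact: (hilbert_recursion Hsurj Hker HIi Hx Hh Hh' HrI).
- exact: (hilbert_recursion_strict Hsurj Hker HIi Hx Hh Hh' HrI).
Qed.
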